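(* Let $R$ be a commutative ring, $I$ an ideal of $R$ and $n\ge 3$. Then $\mathrm{EO}_{2n}(R,I)\subseteq \mathrm{EO}^1_{2n}(R,I)$.
   Context: Let $\sigma$ be the permutation of $\{1,\dots,2n\}$ with $\sigma(2i)=2i-1$, $\sigma(2i-1)=2i$. Let $\widetilde\psi_n=\sum_{i=1}^n(e_{2i-1,2i}+e_{2i,2i-1})$ and $\mathrm{O}_{2n}(R)=\{\alpha\in\mathrm{GL}_{2n}(R):\alpha^t\widetilde\psi_n\alpha=\widetilde\psi_n\}$. For $z\in R$ and $1\le i\ne j\le 2n$ with $i\ne\sigma(j)$, $oe_{ij}(z)=1_{2n}+z e_{ij}-z e_{\sigma(j)\sigma(i)}$. $\mathrm{EO}_{2n}(R)$ is generated by all $oe_{ij}(z)$; $\mathrm{EO}_{2n}(I)$ is generated by the $oe_{ij}(x)$, $x\in I$; $\mathrm{EO}_{2n}(R,I)$ is the normal closure of $\mathrm{EO}_{2n}(I)$ in $\mathrm{EO}_{2n}(R)$. $\mathrm{EO}^1_{2n}(R,I)$ is the subgroup of $\mathrm{EO}_{2n}(R)$ generated by the elements $oe_{1i}(a)$ and $oe_{j1}(x)$ with $a\in R$, $x\in I$, $3\le i,j\le 2n$. *)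

From HB Require Import structures.
From mathcomp Require Import all_boot all_order all_algebra.
Set Implicit Arguments. Unset Strict Implicit. Unset Printing Implicit Defensive.
Import GRing.Theory.
Local Open Scope ring_scope.

(* Indices: the paper's {1,...,2n} is represented 0-based as 'I_(2 * n):
   paper index k corresponds to ordinal k-1.  The paper's pairs
   {2i-1, 2i} become {2i-2, 2i-1} = {even, odd}, so sigma is: *)
Definition sig_nat (k : nat) : nat := if odd k then k.-1 else k.+1.

Definition is_ideal (R : comNzRingType) (I : {pred R}) : Prop :=
  [/\ 0 \in I,
      (forall x y, x \in I -> y \in I -> x + y \in I) &
      (forall a x, x \in I -> a * x \in I)].

(* oe_{ij}(z) = 1 + z e_{ij} - z e_{sigma(j) sigma(i)}, entrywise
   (e_{sigma j, sigma i} has entry 1 at (a,b) iff a = sigma j, b = sigma i,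
    iff sigma a = j and sigma b = i since sigma is an involution). *)
Definition oe (R : comNzRingType) (m : nat) (i j : 'I_m) (z : R) : 'M[R]_m :=
  \matrix_(a, b)
    ((a == b)%:R + z * (((a == i) && (b == j)) : bool)%:R
       - z * (((sig_nat a == j) && (sig_nat b == i)) : bool)%:R).

Inductive gen (R : comNzRingType) (m : nat) (S : 'M[R]_m -> Prop) : 'M[R]_m -> Prop :=
| gen_one : gen S 1%:M
| gen_mem x : S x -> gen S x
| gen_mul x y : gen S x -> gen S y -> gen S (x *m y)
| gen_inv x y : gen S x -> x *m y = 1%:M -> y *m x = 1%:M -> gen S y.

Definition oe_adm (m : nat) (i j : 'I_m) : Prop :=
  i != j /\ (i : nat) != sig_nat j.

Definition EO (R : comNzRingType) (n : nat) : 'M[R]_(2 * n) -> Prop :=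
  gen (fun g => exists (i j : 'I_(2 * n)) (z : R), oe_adm i j /\ g = oe i j z).

Definition EO_ideal (R : comNzRingType) (n : nat) (I : {pred R}) : 'M[R]_(2 * n) -> Prop :=
  gen (fun g => exists (i j : 'I_(2 * n)) (x : R),
         [/\ oe_adm i j, x \in I & g = oe i j x]).

Definition EO_rel (R : comNzRingType) (n : nat) (I : {pred R}) : 'M[R]_(2 * n) -> Prop :=
  gen (fun g => exists h k x : 'M[R]_(2 * n),
         [/\ EO h, h *m k = 1%:M, k *m h = 1%:M, EO_ideal I x & g = h *m x *m k]).

(* EO^1_{2n}(R,I): generated by oe_{1i}(a), oe_{j1}(x), a in R, x in I,
   3 <= i, j <= 2n  (0-based: index 0, and indices >= 2). *)
Definition EO1_rel (R : comNzRingType) (n : nat) (I : {pred R}) : 'M[R]_(2 * n) -> Prop :=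
  gen (fun g =>
    (exists (i j : 'I_(2 * n)) (a : R), [/\ (i : nat) = 0%N, (2 <= j)%N & g = oe i j a])
    \/ (exists (j i : 'I_(2 * n)) (x : R),
          [/\ (i : nat) = 0%N, (2 <= j)%N, x \in I & g = oe j i x])).

From HB Require Import structures.
From mathcomp Require Import all_boot all_order all_algebra.
From mathcomp Require Import zify ring.
Set Implicit Arguments. Unset Strict Implicit. Unset Printing Implicit Defensive.
Import GRing.Theory.
Local Open Scope ring_scope.

(* Write oe i j z = 1 + z X_ij with X_ij = e_ij - e_{sigma j, sigma i} (here
   [lie i j]).  For an admissible pair X_ij^2 = 0, and unless the two roots are
   equal or opposite, the commutator of X_kl and X_ij is either 0 or a multiple
   of a single X_pq annihilated by both.  This yields the Chevalley commutator
   formulas, e.g. [oe_ab(x), oe_bd(y)] = oe_ad(xy).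

   With them one shows that the subgroup generated by the elementary conjugates
   oe_kl(a) oe_ij(c) oe_kl(-a), c in I, is normalised by every oe_kl(b), hence
   contains EO_2n(R,I).  The only delicate case is conjugating
   oe_ji(a) oe_ij(c) oe_ji(-a) by oe_ij(b): there oe_ij(c) is first split as a
   commutator [oe_ih(c), oe_hj(1)] through an index h apart from i and j, which
   exists since n >= 3.  Finally every elementary conjugate is rewritten, with
   the same formulas routed through the first index, as a product of the
   generators oe_1j(a) and oe_j1(x), x in I, of EO^1_2n(R,I). *)

Section GeneratedSubgroups.
Variables (R : comNzRingType) (m : nat).
Local Notation M := 'M[R]_m.

Definition mxconj (h hi y : M) : M := h *m y *m hi.

Lemma mxconjA h1 hi1 h2 hi2 y :
  mxconj h1 hi1 (mxconj h2 hi2 y) = mxconj (h1 *m h2) (hi2 *m hi1) y.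
Proof. by rewrite /mxconj !mulmxA. Qed.

Lemma mxconjM h hi y z : hi *m h = 1%:M ->
  mxconj h hi (y *m z) = mxconj h hi y *m mxconj h hi z.
Proof. by move=> E; rewrite /mxconj !mulmxA -(mulmxA _ hi h) E mulmx1. Qed.

Lemma mulmx4_mid (A B C D : M) : A *m B *m C *m D = A *m mxconj B D C.
Proof. by rewrite /mxconj !mulmxA. Qed.

Lemma mulmx4_left (A B C D : M) : A *m B *m C *m D = mxconj A C B *m D.
Proof. by []. Qed.

Lemma mulmx_inv_uniq (A B C : M) : A *m B = 1%:M -> C *m A = 1%:M -> B = C.
Proof. by move=> E1 E2; rewrite -[B]mul1mx -E2 -mulmxA E1 mulmx1. Qed.

Lemma gen_sub (S S' : M -> Prop) :
  (forall g, S g -> gen S' g) -> forall y, gen S y -> gen S' y.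
Proof.
move=> HS y; elim=> [|x Sx|x z _ IHx _ IHz|x z _ IH Exz Ezx].
- exact: gen_one.
- exact: HS.
- exact: gen_mul.
- exact: (gen_inv IH).
Qed.

Lemma gen_conj (S S' : M -> Prop) h hi : h *m hi = 1%:M -> hi *m h = 1%:M ->
  (forall g, S g -> gen S' (mxconj h hi g)) ->
  forall y, gen S y -> gen S' (mxconj h hi y).
Proof.
move=> E1 E2 HS y; elim=> [|x Sx|x z _ IHx _ IHz|x z _ IH Exz Ezx].
- by rewrite /mxconj mulmx1 E1; exact: gen_one.
- exact: HS.
- by rewrite mxconjM //; exact: gen_mul.
- apply: (gen_inv IH); rewrite -mxconjM // ?Exz ?Ezx /mxconj mulmx1 //.
Qed.

Lemma mulmx_unipotent (S U : M) a b : (1%:M + a *: S) *m (1%:M + b *: U) =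
   1%:M + a *: S + b *: U + (a * b) *: (S *m U).
Proof.
rewrite mulmxDl !mulmxDr !mul1mx !mulmx1 -!scalemxAl -!scalemxAr scalerA.
by apply/matrixP => x y; rewrite !mxE; ring.
Qed.

Lemma unipotent_commute (S U : M) b c : S *m U = U *m S ->
  (1%:M + b *: S) *m (1%:M + c *: U) = (1%:M + c *: U) *m (1%:M + b *: S).
Proof. by move=> E; rewrite !mulmx_unipotent E mulrC (addrAC _ (b *: S)). Qed.

Lemma unipotent_commutator (S U V : M) e b c :
  S *m U - U *m S = e *: V -> V *m U = 0 -> V *m S = 0 ->
  (1%:M + b *: S) *m (1%:M + c *: U) =
  (1%:M + (e * b * c) *: V) *m (1%:M + c *: U) *m (1%:M + b *: S).
Proof.
move=> E VU VS; rewrite !mulmx_unipotent VU scaler0 addr0.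
have -> : 1%:M + (e * b * c) *: V + c *: U = 1%:M + 1 *: ((e * b * c) *: V + c *: U)
  by rewrite scale1r addrA.
rewrite mulmx_unipotent.
rewrite mulmxDl -!scalemxAl VS scaler0 add0r.
have -> : S *m U = U *m S + e *: V by rewrite -E addrC subrK.
by apply/matrixP => x y; rewrite !mxE; ring.
Qed.

End GeneratedSubgroups.

Section Ideal.
Variables (R : comNzRingType) (I : {pred R}).
Hypothesis HI : is_ideal I.

Lemma idealMl a x : x \in I -> a * x \in I.
Proof. by case: HI => _ _; apply. Qed.

Lemma idealMr a x : x \in I -> x * a \in I.
Proof. by rewrite mulrC; apply: idealMl. Qed.

Lemma idealN x : x \in I -> - x \in I.
Proof. by move=> H; rewrite -mulN1r; apply: idealMl. Qed.

End Ideal.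

Lemma sig_natE k : sig_nat k = (k + 1 - 2 * (k %% 2))%N.
Proof. by rewrite /sig_nat modn2; case: (odd k) => /=; lia. Qed.

Section ElementaryOrthogonal.
Variables (R : comNzRingType) (n : nat).
Local Notation m := (2 * n)%N.
Local Notation M := 'M[R]_m.

Lemma sigma_lt (i : 'I_m) : (sig_nat i < m)%N.
Proof. by have := ltn_ord i; rewrite sig_natE; lia. Qed.

Definition sigma (i : 'I_m) : 'I_m := Ordinal (sigma_lt i).

Lemma sigmaE i : (sigma i : nat) = sig_nat i. Proof. by []. Qed.

Lemma sigmaK i : sigma (sigma i) = i.
Proof. by apply: val_inj; rewrite /= !sig_natE; lia. Qed.

Lemma sigma_eqsym (x y : 'I_m) : (sigma x == y) = (x == sigma y).
Proof. by apply/eqP/eqP => [<-|->]; rewrite sigmaK. Qed.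

Lemma eq_sigmasym (x y : 'I_m) : (x == sigma y) = (y == sigma x).
Proof. by rewrite -sigma_eqsym eq_sym. Qed.

Lemma sigma_inj_eq (x y : 'I_m) : (sigma x == sigma y) = (x == y).
Proof. by apply/eqP/eqP => [E|->] //; rewrite -(sigmaK x) E sigmaK. Qed.

Lemma ord_eqF (x y : 'I_m) : (x : nat) <> y -> (x == y) = false.
Proof. by move=> H; apply/eqP => E; apply: H; rewrite E. Qed.

Lemma eq_sigma_id (x : 'I_m) : (x == sigma x) = false.
Proof. by apply: ord_eqF; rewrite sigmaE sig_natE; lia. Qed.

Definition apart (i j : 'I_m) : Prop := (i %/ 2)%N <> (j %/ 2)%N.

Ltac lia_apart := try unfold apart in *; rewrite ?sigmaE ?sig_natE;
  repeat match goal with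
  | H : context[nat_of_ord (sigma _)] |- _ => rewrite sigmaE in H
  | H : context[sig_nat _] |- _ => rewrite sig_natE in H
  end; lia.

Lemma oe_admE i j : oe_adm i j <-> apart i j.
Proof.
rewrite /oe_adm; split=> [[/eqP Hij /eqP]|Hij].
  have : (i : nat) <> j by move=> E; apply: Hij; apply: val_inj.
  lia_apart.
by split; apply/eqP => E; [apply: Hij; rewrite E | move: E; lia_apart].
Qed.

Lemma apart_sym i j : apart i j -> apart j i. Proof. by lia_apart. Qed.
Lemma apart_sigmal a b : apart a b -> apart (sigma a) b. Proof. by lia_apart. Qed.
Lemma apart_sigma_swap a b : apart a (sigma b) -> apart (sigma a) b.
Proof. by lia_apart. Qed.

Lemma apart_irr x : ~ apart x x. Proof. by lia_apart. Qed.
Lemma apart_sigma_id x : ~ apart x (sigma x). Proof. by lia_apart. Qed.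
Lemma apart_sigma_idl x : ~ apart (sigma x) x. Proof. by lia_apart. Qed.

Lemma apart_eqF x y : apart x y -> (x == y) = false.
Proof. by move=> H; apply: ord_eqF; lia_apart. Qed.
Lemma apart_eqFr x y : apart x y -> (y == x) = false.
Proof. by move=> H; apply: ord_eqF; lia_apart. Qed.
Lemma apart_eq_sigmaF x y : apart x y -> (x == sigma y) = false.
Proof. by move=> H; apply: ord_eqF; lia_apart. Qed.
Lemma apart_eq_sigmaFr x y : apart x y -> (y == sigma x) = false.
Proof. by move=> H; apply: ord_eqF; lia_apart. Qed.

Lemma apart_of_neq x y : (x == y) = false -> (x == sigma y) = false -> apart x y.
Proof.
move=> /eqP H1 /eqP H2.
have : (x : nat) <> y by move=> E; apply: H1; apply: val_inj.
have : (x : nat) <> sigma y by move=> E; apply: H2; apply: val_inj.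
lia_apart.
Qed.

Ltac sigma_norm_in H :=
  repeat first [rewrite sigmaK in H | rewrite sigma_inj_eq in H | rewrite sigma_eqsym in H].

(* Decides the boolean (in)equalities between indices that the [apart]
   hypotheses of the context settle. *)
Ltac simpl_ord_eq :=
  rewrite ?sigmaK ?sigma_inj_eq ?sigma_eqsym ?sigmaK ?eqxx ?eq_sigma_id;
  repeat match goal with
  | H : context[sigma (sigma _)] |- _ => rewrite sigmaK in H
  | H : context[sigma _ == sigma _] |- _ => rewrite sigma_inj_eq in H
  | H : context[sigma _ == _] |- _ => rewrite sigma_eqsym in H
  end;
  repeat match goal with
  | H : apart ?x ?y |- _ => let F := fresh "F" in
       first [ have F := apart_eqF H; sigma_norm_in F; progress rewrite F
             | have F := apart_eqFr H; sigma_norm_in F; progress rewrite F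
             | have F := apart_eq_sigmaF H; sigma_norm_in F; progress rewrite F
             | have F := apart_eq_sigmaFr H; sigma_norm_in F; progress rewrite F ]; clear F
  | H : (?x == ?y) = false |- context[?x == ?y] => rewrite H
  | H : (?x == ?y) = false |- context[?y == ?x] => rewrite (eq_sym y x) H
  | H : (?x == sigma ?y) = false |- context[?y == sigma ?x] => rewrite (eq_sigmasym y x) H
  end; rewrite /=.

Ltac apart_contra := exfalso; match goal with
  | H : apart ?x ?x |- _ => exact: (apart_irr H)
  | H : apart ?x (sigma ?x) |- _ => exact: (apart_sigma_id H)
  | H : apart (sigma ?x) ?x |- _ => exact: (apart_sigma_idl H)
  end.

Ltac subst_eqs := repeat match goal with
  | E : (?x == ?y) = true |- _ => move/eqP: E => E; subst
  end.

Ltac simpl_scale0 :=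
  rewrite /= ?mulr0n ?mulr1n ?scale0r ?scale1r ?subr0 ?sub0r ?addr0 ?add0r ?oppr0.

Definition lie (i j : 'I_m) : M := delta_mx i j - delta_mx (sigma j) (sigma i).

Lemma oe_lie i j z : oe i j z = 1%:M + z *: lie i j.
Proof.
have sig_nat_eq (a k : 'I_m) : (sig_nat a == k) = (a == sigma k).
  apply/eqP/eqP => [E|->]; last by rewrite /= !sig_natE; lia.
  by apply: val_inj; rewrite /= -E !sig_natE; lia.
apply/matrixP => a b; rewrite /lie !mxE !sig_nat_eq.
by case: (a == b); case: (a == i); case: (b == j);
  case: (a == sigma j); case: (b == sigma i) => /=; ring.
Qed.

Lemma lie_mul i j k l : lie i j *m lie k l =
  (j == k)%:R *: delta_mx i l - (j == sigma l)%:R *: delta_mx i (sigma k)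
  - (k == sigma i)%:R *: delta_mx (sigma j) l
  + (i == l)%:R *: delta_mx (sigma j) (sigma k).
Proof.
rewrite /lie mulmxBl !mulmxBr !mul_delta_mx_cond sigma_inj_eq sigma_eqsym.
rewrite (eq_sigmasym i k) -!scaler_nat.
by apply/matrixP => a b; rewrite !mxE; ring.
Qed.

Lemma lie_commutator k l i j : lie k l *m lie i j - lie i j *m lie k l =
  (l == i)%:R *: lie k j - (k == j)%:R *: lie i l
  - (j == sigma l)%:R *: lie k (sigma i) - (k == sigma i)%:R *: lie (sigma l) j.
Proof.
rewrite !lie_mul /lie !sigmaK (eq_sigmasym l j) (eq_sigmasym i k).
rewrite (eq_sym j k) (eq_sym i l).
by apply/matrixP => a b; rewrite !mxE; ring.
Qed.

Lemma lie_mul_self i j : apart i j -> lie i j *m lie i j = 0.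
Proof. by move=> H; rewrite lie_mul; simpl_ord_eq; simpl_scale0. Qed.

Lemma lie_sigma i j : lie (sigma j) (sigma i) = - lie i j.
Proof. by rewrite /lie !sigmaK opprB. Qed.

Lemma lie_sigma_diag (i j : 'I_m) : i == sigma j -> lie i j = 0.
Proof. by move/eqP=> ->; rewrite /lie sigmaK subrr. Qed.

Lemma oe0 (i j : 'I_m) : oe i j (0 : R) = 1%:M.
Proof. by rewrite oe_lie scale0r addr0. Qed.

Lemma oe_mulD (i j : 'I_m) (a b : R) : apart i j ->
  oe i j a *m oe i j b = oe i j (a + b).
Proof.
by move=> H; rewrite !oe_lie mulmx_unipotent lie_mul_self // scaler0 addr0 -addrA -scalerDl.
Qed.

Lemma oe_mulN (i j : 'I_m) (a : R) : apart i j -> oe i j a *m oe i j (- a) = 1%:M.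
Proof. by move=> H; rewrite oe_mulD // subrr oe0. Qed.

Lemma oe_mulNl (i j : 'I_m) (a : R) : apart i j -> oe i j (- a) *m oe i j a = 1%:M.
Proof. by move=> H; rewrite oe_mulD // addNr oe0. Qed.

Lemma oe_sigma (i j : 'I_m) (a : R) : oe i j a = oe (sigma j) (sigma i) (- a).
Proof. by rewrite !oe_lie lie_sigma scaleNr scalerN opprK. Qed.

Definition oe_commute (k l i j : 'I_m) : Prop :=
  forall a b : R, oe k l b *m oe i j a = oe i j a *m oe k l b.

Lemma lie_commute_oe k l i j :
  lie k l *m lie i j = lie i j *m lie k l -> oe_commute k l i j.
Proof. by move=> E a b; rewrite !oe_lie unipotent_commute. Qed.

Lemma lie_commutator_oe k l i j p q e :
  lie k l *m lie i j - lie i j *m lie k l = e *: lie p q ->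
  lie p q *m lie i j = 0 -> lie p q *m lie k l = 0 ->
  forall a b : R, oe k l b *m oe i j a = oe p q (e * b * a) *m oe i j a *m oe k l b.
Proof. by move=> E1 E2 E3 a b; rewrite !oe_lie (unipotent_commutator _ _ E1). Qed.

Ltac solve_lie_commute :=
  apply: lie_commute_oe; rewrite !lie_mul; simpl_ord_eq; simpl_scale0; try done.
Ltac solve_lie_zero := rewrite lie_mul; simpl_ord_eq; simpl_scale0; done.

Lemma oe_commute_row a b d : apart a b -> apart a d -> oe_commute a b a d.
Proof.
by move=> H1 H2; case E: (b == sigma d); solve_lie_commute; subst_eqs; simpl_ord_eq; simpl_scale0.
Qed.

Lemma oe_commute_col a b d : apart a b -> apart d b -> oe_commute a b d b.
Proof.
by move=> H1 H2; case E: (a == sigma d); solve_lie_commute; subst_eqs; simpl_ord_eq; simpl_scale0.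
Qed.

Lemma oe_chain a b d (x y : R) : apart a b -> apart b d -> apart a d ->
  oe a b x *m oe b d y = oe a d (x * y) *m oe b d y *m oe a b x.
Proof.
move=> H1 H2 H3; rewrite -[x * y]mul1r mulrA.
apply: (lie_commutator_oe (k := a)); [|solve_lie_zero|solve_lie_zero].
by rewrite lie_commutator; simpl_ord_eq; simpl_scale0; rewrite ?scale1r.
Qed.

Lemma oe_chain_commutator a b d (x y : R) : apart a b -> apart b d -> apart a d ->
  oe a d (x * y) = oe a b x *m oe b d y *m oe a b (- x) *m oe b d (- y).
Proof.
move=> H1 H2 H3; rewrite oe_chain // -!mulmxA (mulmxA (oe a b x)) oe_mulN // mul1mx.
by rewrite oe_mulN // mulmx1.
Qed.

Lemma oe_chain_conjl a b d (x y : R) : apart a b -> apart b d -> apart a d ->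
  mxconj (oe a b x) (oe a b (- x)) (oe b d y) = oe a d (x * y) *m oe b d y.
Proof. by move=> H1 H2 H3; rewrite /mxconj oe_chain // -!mulmxA oe_mulN // mulmx1. Qed.

Lemma oe_chain_conjr a b d (x y : R) : apart a b -> apart b d -> apart a d ->
  mxconj (oe b d y) (oe b d (- y)) (oe a b x) = oe a d (- (x * y)) *m oe a b x.
Proof.
move=> H1 H2 H3; rewrite /mxconj.
have -> : oe b d y *m oe a b x = oe a d (- (x * y)) *m oe a b x *m oe b d y.
  by rewrite -!mulmxA oe_chain // !mulmxA oe_mulD ?addNr ?oe0 ?mul1mx.
by rewrite -!mulmxA oe_mulN // mulmx1.
Qed.

(* [oe k l] and [oe i j] parametrise the same root subgroup (see [oe_sigma]). *)
Definition same_root (k l i j : 'I_m) : bool :=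
  ((k == i) && (l == j)) || ((k == sigma j) && (l == sigma i)).

Ltac commutator_case B p q e := right; exists p, q, e; split;
  [ by apply: apart_of_neq; simpl_ord_eq
  | by apply: lie_commutator_oe; [rewrite B ?scale1r ?scaleN1r | solve_lie_zero | solve_lie_zero]
  | solve_lie_commute | solve_lie_commute | by simpl_ord_eq ].

Lemma oe_commute_or_commutator k l i j : apart k l -> apart i j ->
  ~~ same_root k l i j -> ~~ same_root k l j i ->
  oe_commute k l i j \/ exists p q e, [/\ apart p q,
    (forall a b : R, oe k l b *m oe i j a = oe p q (e * b * a) *m oe i j a *m oe k l b),
    oe_commute k l j i, oe_commute p q i j & ~~ same_root p q i j].
Proof.
move=> Hkl Hij Hs Ho.
have B := lie_commutator k l i j.
case E1: (l == i); case E2: (k == j); case E3: (j == sigma l); case E4: (k == sigma i);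
  subst_eqs; move: B Hs Ho; rewrite /same_root; simpl_ord_eq; simpl_scale0 => B Hs Ho;
  try done; try apart_contra.
- case E5: (k == sigma j); last by commutator_case B k j (1 : R).
  by left; apply: lie_commute_oe; apply/eqP; rewrite -subr_eq0 B lie_sigma_diag.
- case E5: (i == sigma l); last by commutator_case B i l (-1 : R).
  by left; apply: lie_commute_oe; apply/eqP; rewrite -subr_eq0 B lie_sigma_diag ?oppr0.
- case E5: (k == i); last by commutator_case B k (sigma i) (-1 : R).
  by left; apply: lie_commute_oe; apply/eqP; rewrite -subr_eq0 B lie_sigma_diag ?oppr0 // sigmaK.
- case E5: (l == j); last by commutator_case B (sigma l) j (-1 : R).
  left; apply: lie_commute_oe; apply/eqP.
  by rewrite -subr_eq0 B lie_sigma_diag ?oppr0 // sigma_inj_eq.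
- by left; apply: lie_commute_oe; apply/eqP; rewrite -subr_eq0 B.
Qed.

Local Notation oec k l b y := (mxconj (oe k l b) (oe k l (- b)) y).

Lemma oe_conj_sigma k l (b : R) y : oec (sigma l) (sigma k) b y = oec k l (- b) y.
Proof. by rewrite (oe_sigma k l) (oe_sigma k l (- - b)) opprK. Qed.

Lemma oe_conj_self i j (b c : R) : apart i j -> oec i j b (oe i j c) = oe i j c.
Proof. by move=> H; rewrite /mxconj !oe_mulD // addrAC subrr add0r. Qed.

Lemma oe_conj_merge i j (a b : R) y : apart i j ->
  oec i j b (oec i j a y) = oec i j (b + a) y.
Proof. by move=> H; rewrite mxconjA !oe_mulD //; congr (mxconj _ (oe _ _ _) _); ring. Qed.

Lemma oe_conj_commute k l i j (b c : R) : apart k l -> oe_commute k l i j ->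
  oec k l b (oe i j c) = oe i j c.
Proof. by move=> H C; rewrite /mxconj C -mulmxA oe_mulN // mulmx1. Qed.

Lemma oe_conj_commutator k l i j p q e (b c : R) : apart k l ->
  (forall a b : R, oe k l b *m oe i j a = oe p q (e * b * a) *m oe i j a *m oe k l b) ->
  oec k l b (oe i j c) = oe p q (e * b * c) *m oe i j c.
Proof. by move=> H C; rewrite /mxconj C -!mulmxA oe_mulN // mulmx1. Qed.

Variable I : {pred R}.
Hypothesis HI : is_ideal I.
Hypothesis Hn : (3 <= n)%N.

Ltac solve_memI := first [ assumption
  | apply: (idealN HI); solve_memI
  | apply: (idealMl HI); solve_memI
  | apply: (idealMr HI); solve_memI ].

Lemma apart_third (x y : 'I_m) : exists h : 'I_m, apart h x /\ apart h y.
Proof.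
pose h0 := (if (x %/ 2 != 0) && (y %/ 2 != 0) then 0
            else if (x %/ 2 != 1) && (y %/ 2 != 1) then 2 else 4)%N.
have Hh : (h0 < m)%N by rewrite /h0; case: ifP => _; try case: ifP => _; lia.
exists (Ordinal Hh); rewrite /apart /= /h0.
case: ifP => [/andP [/eqP H1 /eqP H2]|/andP H]; first by split; lia.
by case: ifP => [/andP [/eqP H1 /eqP H2]|/andP H']; split; lia.
Qed.

Definition ideal_root (g : M) := exists i j x, [/\ apart i j, x \in I & g = oe i j x].

Definition elem_conj (g : M) := exists k l i j a c,
  [/\ apart k l, apart i j, c \in I & g = oec k l a (oe i j c)].

Definition EOconj := gen elem_conj.

Lemma gen_ideal_root_conj k l b y : apart k l -> gen ideal_root y ->
  EOconj (oec k l b y).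
Proof.
move=> H; apply: gen_conj; [exact: oe_mulN | exact: oe_mulNl |].
by move=> g [i [j [x [Hij Hx ->]]]]; apply: gen_mem; exists k, l, i, j, b, x.
Qed.

Lemma gen_ideal_root_EOconj y : gen ideal_root y -> EOconj y.
Proof.
apply: gen_sub => g [i [j [x [Hij Hx ->]]]]; apply: gen_mem.
by exists i, j, i, j, 0, x; split; rewrite // /mxconj oppr0 oe0 mul1mx mulmx1.
Qed.

Lemma conj_ideal_root k l i j b c : apart k l -> apart i j ->
  ~~ same_root k l j i -> c \in I -> gen ideal_root (oec k l b (oe i j c)).
Proof.
move=> Hkl Hij Ho Hc.
case Hs: (same_root k l i j).
  move: Hs; rewrite /same_root; case/orP => /andP [/eqP -> /eqP ->];
    by rewrite ?oe_conj_sigma oe_conj_self //; apply: gen_mem; exists i, j, c.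
have [C|[p [q [e [Hpq C _ _ _]]]]] := oe_commute_or_commutator Hkl Hij (negbT Hs) Ho.
  by rewrite oe_conj_commute //; apply: gen_mem; exists i, j, c.
rewrite (oe_conj_commutator _ _ Hkl C); apply: gen_mul; apply: gen_mem.
  by exists p, q, (e * b * c); split => //; apply: (idealMl HI).
by exists i, j, c.
Qed.

Lemma elem_conj_conj_other k l i j a b c : apart k l -> apart i j ->
  ~~ same_root k l i j -> c \in I -> EOconj (oec k l b (oec j i a (oe i j c))).
Proof.
move=> Hkl Hij Ho Hc; have Hji := apart_sym Hij.
case Hs: (same_root k l j i).
  move: Hs; rewrite /same_root; case/orP => /andP [/eqP -> /eqP ->];
    rewrite ?oe_conj_sigma oe_conj_merge //;
    by apply: gen_mem; exists j, i, i, j; eexists; exists c.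
have [C|[p [q [e [Hpq C Cs Cv Hv]]]]] := oe_commute_or_commutator Hkl Hji (negbT Hs) Ho.
  rewrite !mxconjA (C a b) -(C (-a) (-b)) -mxconjA.
  by apply: gen_ideal_root_conj => //; apply: conj_ideal_root => //; rewrite Hs.
have Ei : oe j i (-a) *m oe k l (-b) =
    oe k l (-b) *m oe j i (-a) *m oe p q (- (e * b * a)).
  apply: (mulmx_inv_uniq (A := oe k l b *m oe j i a)).
    by rewrite -mulmxA (mulmxA (oe j i a)) oe_mulN // mul1mx oe_mulN.
  rewrite (C a b) -!mulmxA (mulmxA (oe p q _)) oe_mulNl // mul1mx.
  by rewrite (mulmxA (oe j i (-a))) oe_mulNl // mul1mx oe_mulNl.
rewrite mxconjA Ei (C a b) -(mulmxA (oe k l (-b))) -mxconjA (oe_conj_commute _ _ Hkl Cs).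
rewrite (Cv a (e * b * a)) -(Cv (-a) (- (e * b * a))) -mxconjA.
by apply: gen_ideal_root_conj => //; apply: conj_ideal_root.
Qed.

Definition ideal_root_into (i j h : 'I_m) (g : M) :=
  exists2 d, d \in I & g = oe i h d \/ g = oe j h d.

(* Split [oe i j c = [oe i h c, oe h j 1]] and conjugate each of the four factors. *)
Lemma elem_conj_conj_same i j a b c : apart i j -> c \in I ->
  EOconj (oec i j b (oec j i a (oe i j c))).
Proof.
move=> Hij Hc; have Hji := apart_sym Hij.
have [h [Hhi Hhj]] := apart_third i j.
have Hih := apart_sym Hhi; have Hjh := apart_sym Hhj.
set g := oe i j b *m oe j i a; set gi := oe j i (-a) *m oe i j (-b).
have ggi : g *m gi = 1%:M.
  by rewrite -mulmxA (mulmxA (oe j i a)) oe_mulN // mul1mx oe_mulN.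
have gig : gi *m g = 1%:M.
  by rewrite -mulmxA (mulmxA (oe i j (-b))) oe_mulNl // mul1mx oe_mulNl.
rewrite mxconjA -[c]mulr1 (@oe_chain_commutator i h j c 1 Hih Hhj Hij) !mxconjM //.
have Ecol : mxconj g gi (oe h j 1) =
    oe h i (- (1 * a)) *m oe h j (- (- (1 * a) * b) + 1).
  rewrite -mxconjA oe_chain_conjr // mxconjM ?oe_mulNl // oe_chain_conjr //.
  rewrite (oe_conj_commute _ _ Hij (oe_commute_col Hij Hhj)).
  by rewrite (oe_commute_row Hhj Hhi) -mulmxA oe_mulD.
set a1 := - (1 * a); set f1 := - (- (1 * a) * b) + 1.
have EcolN : mxconj g gi (oe h j (- 1)) = oe h j (- f1) *m oe h i (- a1).
  apply: (mulmx_inv_uniq (A := oe h i a1 *m oe h j f1)).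
    by rewrite -Ecol -mxconjM // oe_mulN // /mxconj mulmx1.
  by rewrite -mulmxA (mulmxA (oe h i (- a1))) oe_mulNl // mul1mx oe_mulNl.
have Erow : mxconj g gi (oe i h (- c)) =
    oe i h (b * (a * - c)) *m oe j h (a * - c) *m oe i h (- c).
  rewrite -mxconjA oe_chain_conjl // mxconjM ?oe_mulNl // oe_chain_conjl //.
  by rewrite (oe_conj_commute _ _ Hij (oe_commute_row Hij Hih)).
rewrite mulmx4_mid Ecol EcolN Erow.
apply: gen_mul.
  rewrite -mxconjA; apply: gen_ideal_root_conj => //; apply: conj_ideal_root => //.
  by rewrite /same_root; simpl_ord_eq.
apply: (@gen_conj _ _ (ideal_root_into i j h)).
- by rewrite -mulmxA (mulmxA (oe h j f1)) oe_mulN // mul1mx oe_mulN.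
- by rewrite -mulmxA (mulmxA (oe h i (- a1))) oe_mulNl // mul1mx oe_mulNl.
- move=> u [d Hd [->|->]]; rewrite -mxconjA.
    apply: gen_ideal_root_conj => //; apply: conj_ideal_root => //.
    by rewrite /same_root; simpl_ord_eq.
  by apply: elem_conj_conj_other => //; rewrite /same_root; simpl_ord_eq.
- have Hac : a * - c \in I by apply: (idealMl HI); apply: (idealN HI).
  apply: gen_mul; [apply: gen_mul|]; apply: gen_mem.
  + by exists (b * (a * - c)); [apply: (idealMl HI) | left].
  + by exists (a * - c); last right.
  + by exists (- c); [apply: (idealN HI) | left].
Qed.

Lemma elem_conj_conj_oe k l i j a b c : apart k l -> apart i j -> c \in I ->
  EOconj (oec k l b (oec j i a (oe i j c))).
Proof.
move=> Hkl Hij Hc.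
case Hs: (same_root k l i j); last by apply: elem_conj_conj_other => //; rewrite Hs.
move: Hs; rewrite /same_root; case/orP => /andP [/eqP -> /eqP ->];
  rewrite ?oe_conj_sigma; exact: elem_conj_conj_same.
Qed.

Lemma EOconj_conj_elem_conj k l b g : apart k l -> elem_conj g -> EOconj (oec k l b g).
Proof.
move=> Hkl [u1 [u2 [t1 [t2 [a [c [Hu Ht Hc ->]]]]]]].
case Ho: (same_root u1 u2 t2 t1).
  move: Ho; rewrite /same_root; case/orP => /andP [/eqP -> /eqP ->];
    rewrite ?oe_conj_sigma; exact: elem_conj_conj_oe.
by apply: gen_ideal_root_conj => //; apply: conj_ideal_root => //; rewrite Ho.
Qed.

Lemma EOconj_conj_oe k l b y : apart k l -> EOconj y -> EOconj (oec k l b y).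
Proof.
move=> Hkl; apply: gen_conj; [exact: oe_mulN | exact: oe_mulNl |].
by move=> g Hg; apply: EOconj_conj_elem_conj.
Qed.

Lemma EO_normalizes_EOconj g : EO g -> exists gi, [/\ g *m gi = 1%:M, gi *m g = 1%:M,
   (forall y, EOconj y -> EOconj (mxconj g gi y)) &
   (forall y, EOconj y -> EOconj (mxconj gi g y))].
Proof.
elim=> [|x [i [j [z [/oe_admE Hij ->]]]]|x z _ [xi [E1 E2 C1 C2]] _ [zi [F1 F2 D1 D2]]
        |x y _ [xi [E1 E2 C1 C2]] Exy Eyx].
- by exists 1%:M; split; rewrite ?mulmx1 // => y Hy; rewrite /mxconj mulmx1 mul1mx.
- exists (oe i j (- z)); split; [exact: oe_mulN | exact: oe_mulNl | |].
    by move=> y Hy; apply: EOconj_conj_oe.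
  by move=> y Hy; rewrite -{2}(opprK z); apply: EOconj_conj_oe.
- exists (zi *m xi); split.
  + by rewrite -mulmxA (mulmxA z) F1 mul1mx.
  + by rewrite -mulmxA (mulmxA xi) E2 mul1mx.
  + by move=> y Hy; rewrite -mxconjA; apply: C1; apply: D1.
  + by move=> y Hy; rewrite -mxconjA; apply: D2; apply: C2.
- have Exi : xi = y by apply: (mulmx_inv_uniq E1 Eyx).
  by subst xi; exists x.
Qed.

Lemma EO_ideal_EOconj g : EO_ideal I g -> EOconj g.
Proof.
move=> Hg; apply: gen_ideal_root_EOconj; apply: (gen_sub _ Hg).
by move=> h [i [j [x [/oe_admE Hij Hx ->]]]]; apply: gen_mem; exists i, j, x.
Qed.

Lemma EO_rel_EOconj g : EO_rel I g -> EOconj g.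
Proof.
apply: gen_sub => h [g0 [k [x [Hg0 E1 E2 Hx ->]]]].
have [gi [F1 F2 C1 C2]] := EO_normalizes_EOconj Hg0.
have Ek : gi = k by apply: (mulmx_inv_uniq F1 E2).
by subst gi; exact: (C1 _ (EO_ideal_EOconj Hx)).
Qed.

Lemma m_gt0 : (0 < m)%N. Proof. by lia. Qed.
Definition o0 : 'I_m := Ordinal m_gt0.

Lemma EO1_oe_row j a : apart j o0 -> EO1_rel I (oe o0 j a).
Proof.
by move=> H; apply: gen_mem; left; exists o0, j, a; split => //; move: H; rewrite /apart /=; lia.
Qed.

Lemma EO1_oe_col j x : apart j o0 -> x \in I -> EO1_rel I (oe j o0 x).
Proof.
move=> H Hx; apply: gen_mem; right; exists j, o0, x.
by split => //; move: H; rewrite /apart /=; lia.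
Qed.

Lemma EO1_conj (h hi y : M) : EO1_rel I h -> EO1_rel I hi -> EO1_rel I y ->
  EO1_rel I (mxconj h hi y).
Proof. by move=> *; rewrite /mxconj; apply: gen_mul => //; apply: gen_mul. Qed.

Lemma EO1_ideal_root i j x : apart i j -> x \in I -> EO1_rel I (oe i j x).
Proof.
move=> Hij Hx; have Hji := apart_sym Hij.
case E1: (i == o0); first by move/eqP: E1 => E1; subst i; apply: EO1_oe_row.
case E2: (i == sigma o0).
  move/eqP: E2 => E2; subst i; rewrite oe_sigma sigmaK.
  by apply: EO1_oe_col; [apply: apart_sigmal; apply: apart_sym | apply: (idealN HI)].
case E3: (j == o0); first by move/eqP: E3 => E3; subst j; apply: EO1_oe_col.
case E4: (j == sigma o0).
  by move/eqP: E4 => E4; subst j; rewrite oe_sigma sigmaK; apply: EO1_oe_row; apply: apart_sigmal.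
have Hi0 : apart i o0 by apply: apart_of_neq.
have Hj0 : apart j o0 by apply: apart_of_neq.
rewrite -[x]mulr1 (@oe_chain_commutator i o0 j x 1 Hi0 (apart_sym Hj0) Hij).
by repeat apply: gen_mul; [apply: EO1_oe_col | apply: EO1_oe_row
  | apply: EO1_oe_col => //; apply: (idealN HI) | apply: EO1_oe_row].
Qed.

Lemma EO1_gen_ideal_root (y : M) : gen ideal_root y -> EO1_rel I y.
Proof. by apply: gen_sub => g [i [j [x [Hij Hx ->]]]]; apply: EO1_ideal_root. Qed.

Lemma EO1_elem_conj_apart0 i j a c : apart i o0 -> apart j o0 -> apart i j -> c \in I ->
  EO1_rel I (oec j i a (oe i j c)).
Proof.
move=> Hi0 Hj0 Hij Hc; have Hji := apart_sym Hij.
have H0i := apart_sym Hi0; have H0j := apart_sym Hj0.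
rewrite -[c]mulr1 (@oe_chain_commutator i o0 j c 1 Hi0 H0j Hij) !mxconjM ?oe_mulNl //.
rewrite !oe_chain_conjl // !oe_chain_conjr //.
by repeat apply: gen_mul; first [apply: EO1_oe_row | apply: EO1_oe_col; solve_memI].
Qed.

(* As in [elem_conj_conj_same], split [oe 0 j c = [oe 0 h 1, oe h j c]]. *)
Lemma EO1_elem_conj_at0 j a c : apart j o0 -> c \in I ->
  EO1_rel I (oec j o0 a (oe o0 j c)).
Proof.
move=> Hj0 Hc; have H0j := apart_sym Hj0.
have [h [Hh0 Hhj]] := apart_third o0 j.
have H0h := apart_sym Hh0; have Hjh := apart_sym Hhj.
rewrite -[c]mul1r (@oe_chain_commutator o0 h j 1 c H0h Hhj H0j) !mxconjM ?oe_mulNl //.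
rewrite !oe_chain_conjl // !oe_chain_conjr // mulr1 mulrN1 (oe_commute_col Hjh H0h).
rewrite mulmx4_left -mxconjA.
apply: gen_mul.
  apply: EO1_conj; [exact: EO1_oe_row | exact: EO1_oe_row |].
  rewrite mxconjM ?oe_mulNl //; apply: gen_mul; last exact: EO1_elem_conj_apart0.
  by rewrite oe_chain_conjl //; apply: gen_mul; apply: EO1_oe_col => //; solve_memI.
by apply: gen_mul; apply: EO1_ideal_root => //; solve_memI.
Qed.

Lemma EO1_elem_conj_pair i j a c : apart i j -> c \in I ->
  EO1_rel I (oec j i a (oe i j c)).
Proof.
move=> Hij Hc; have Hji := apart_sym Hij.
case E1: (i == o0); first by move/eqP: E1 => E1; subst i; apply: EO1_elem_conj_at0.
case E2: (i == sigma o0).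
  move/eqP: E2 => E2; subst i.
  rewrite (oe_sigma (sigma o0)) (oe_sigma j (sigma o0)) (oe_sigma j (sigma o0) (- a)) !sigmaK.
  have Hj0 := apart_sigma_swap Hji.
  by apply: EO1_conj; [apply: EO1_oe_row | apply: EO1_oe_row | apply: EO1_oe_col; solve_memI].
case E3: (j == o0).
  move/eqP: E3 => E3; subst j.
  by apply: EO1_conj; [apply: EO1_oe_row | apply: EO1_oe_row | apply: EO1_oe_col].
case E4: (j == sigma o0).
  move/eqP: E4 => E4; subst j.
  rewrite (oe_sigma i (sigma o0)) (oe_sigma (sigma o0) i) (oe_sigma (sigma o0) i (- a)) !sigmaK.
  by apply: EO1_elem_conj_at0; [exact: apart_sigma_swap | solve_memI].
by apply: EO1_elem_conj_apart0 => //; apply: apart_of_neq.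
Qed.

Lemma EO1_elem_conj g : elem_conj g -> EO1_rel I g.
Proof.
move=> [k [l [i [j [a [c [Hkl Hij Hc ->]]]]]]].
case Ho: (same_root k l j i).
  move: Ho; rewrite /same_root; case/orP => /andP [/eqP -> /eqP ->];
    rewrite ?oe_conj_sigma; exact: EO1_elem_conj_pair.
by apply: EO1_gen_ideal_root; apply: conj_ideal_root => //; rewrite Ho.
Qed.

End ElementaryOrthogonal.

Theorem mainTheorem3 (R : comNzRingType) (I : {pred R}) (n : nat) :
  is_ideal I -> (3 <= n)%N ->
  forall g : 'M[R]_(2 * n), EO_rel I g -> EO1_rel I g.
Proof.
move=> HI Hn g /(EO_rel_EOconj HI Hn).
by apply: gen_sub => h; apply: EO1_elem_conj.
Qed.
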